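(* Let $\mathbb{K}\in\{\mathbb{R},\mathbb{C}\}$ and let $\mathcal{X}$ be an infinite-dimensional topological $\mathbb{K}$-vector space whose topological dual $\mathcal{X}^{\ast}$ separates the points of $\mathcal{X}$. Then $\mathbf{F}(\mathcal{X}^{\ast})$, endowed with the weak*-Hausdorff hypertopology, is not locally connected.
   Context: Topological vector spaces are Hausdorff. $\mathcal{X}^{\ast}$ carries the weak* topology. $\mathbf{F}(\mathcal{X}^{\ast})$ is the set of nonempty weak*-closed subsets of $\mathcal{X}^{\ast}$. The weak*-Hausdorff hypertopology on $\mathbf{F}(\mathcal{X}^{\ast})$ is the topology generated by the family of extended pseudometrics $d_H^{(A)}(F,\tilde F)=\max\{\sup_{\sigma\in F}\inf_{\tilde\sigma\in\tilde F}|(\sigma-\tilde\sigma)(A)|,\ \sup_{\tilde\sigma\in\tilde F}\inf_{\sigma\in F}|(\sigma-\tilde\sigma)(A)|\}\in[0,\infty]$, $A\in\mathcal{X}$. *)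

From HB Require Import structures.
From mathcomp Require Import all_boot all_order all_algebra.
From mathcomp Require Import all_classical all_reals all_analysis.
From mathcomp Require Import complex.

Set Implicit Arguments.
Unset Strict Implicit.
Unset Printing Implicit Defensive.

Import Order.TTheory GRing.Theory Num.Theory.
Import numFieldTopology.Exports.

Local Open Scope classical_set_scope.
Local Open Scope ring_scope.

Definition locally_connected (T : topologicalType) : Prop :=
  forall (x : T) (U : set T), nbhs x U ->
    exists V : set T, [/\ open V, V x, connected V & V `<=` U].

Section Hyperspace.
Variables (R : realType) (K : numFieldType) (nrm : K -> R).
Variable X : topologicalLmodType K.

Definition infinite_dimensional : Prop :=
  forall s : seq X, exists x : X,
    forall c : 'I_(size s) -> K, x <> \sum_(i < size s) c i *: s`_i.

Definition dual : set {ptws X -> K^o} :=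
  [set f | linear (f : X -> K^o) /\ continuous (f : X -> K^o)].

Definition dual_separates : Prop :=
  forall x y : X, x <> y -> exists2 f, dual f & f x <> f y.

(* Weak*-closed subsets of X^*: the weak* topology is the topology on X^*
   induced by the topology of pointwise convergence {ptws X -> K}, so F is
   weak*-closed in X^* iff F is contained in X^* and closure F meets X^* only
   in F. *)
Definition wstar_closed (F : set {ptws X -> K^o}) : Prop :=
  F `<=` dual /\ closure F `&` dual `<=` F.

Definition hyperset (F : set {ptws X -> K^o}) : Prop :=
  F !=set0 /\ wstar_closed F.

Definition hyper := {F : set {ptws X -> K^o} | hyperset F}.

Definition dH (A : X) (F G : set {ptws X -> K^o}) : \bar R :=
  maxe (ereal_sup [set ereal_inf [set (nrm (s A - t A))%:E | t in G] | s in F])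
       (ereal_sup [set ereal_inf [set (nrm (s A - t A))%:E | s in F] | t in G]).

Definition hball (A : X) (F : hyper) (e : R) : set hyper :=
  [set G | dH A (sval F) (sval G) < e%:E]%E.

Definition hsubbase : set (set hyper) :=
  [set B | exists A F e, 0 < e /\ B = hball A F e].

(* F(X^star) with the weak*-Hausdorff hypertopology: the topology generated
   by the family of extended pseudometrics d_H^(A), A in X, i.e. the
   topology with subbase the open d_H^(A)-balls. *)
(* (the type is indexed by the absolute value nrm so that the topology, which
   depends on nrm through d_H, is attached to it canonically) *)
Definition hyperspace_of (n : K -> R) : Type := hyper.
Notation hyperspace := (hyperspace_of nrm).
HB.instance Definition _ := gen_eqMixin hyperspace.
HB.instance Definition _ := gen_choiceMixin hyperspace.
HB.instance Definition _ := @isSubBaseTopological.Build hyperspace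
  (set hyperspace) (hsubbase : set (set hyperspace)) id.

End Hyperspace.

Notation hyperspace nrm X := (@hyperspace_of _ _ X nrm).

(* Every open set V containing the hyperset {0} is disconnected. Such a V
   contains a basic neighbourhood of {0}, and that neighbourhood is described by
   the pseudometrics d_H^(A) for A in a finite set s. As X* separates points
   and X is infinite dimensional, X* is not finite dimensional, so some sigma
   in X* vanishes on s but not at some point B. The annihilator G of s lies in
   V, because d_H^(A) only sees values at A, and these vanish on {0} and on G
   alike. But G contains all multiples of sigma, so it is unbounded at B, while
   {0} is bounded at B; and boundedness at B is clopen, since it passes to every
   hyperset within d_H^(B)-distance 1. *)

From HB Require Import structures.
From mathcomp Require Import all_boot all_order all_algebra.
From mathcomp Require Import all_classical all_reals all_analysis.
From mathcomp Require Import complex ring.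
From mathcomp Require Import finmap.
Import numFieldTopology.Exports.
Set Implicit Arguments.
Unset Strict Implicit.
Unset Printing Implicit Defensive.
Import Order.TTheory GRing.Theory Num.Theory.
Local Open Scope ring_scope.

Section FiniteSpan.
Variable K : fieldType.

Lemma mem_span_lincomb n (l : seq 'rV[K]_n) v : v \in span l ->
  exists c : nat -> K, v = \sum_(i < size l) c i *: l`_i.
Proof.
move=> /(@coord_span _ _ _ (in_tuple l)) {1}->.
exists (fun j => if insub j is Some i then coord (in_tuple l) i v else 0).
by apply: eq_bigr => i _; rewrite valK.
Qed.

Lemma finite_spanning_subfamily (T : Type) n (f : T -> 'rV[K]_n) :
  exists ts : seq T, forall v, f v \in span (map f ts).
Proof.
apply: contrapT => /forallNP no_spanning.
have large_span k : exists ts, (k <= \dim (span (map f ts)))%N.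
  elim: k => [|k [ts le_k]]; first by exists [::].
  have [v /negP fv_out] := (existsNP _).2 (no_spanning ts).
  exists (v :: ts); apply: leq_ltn_trans le_k _.
  rewrite /= span_cons (ltn_leqif (dimv_leqif_sup (addvSr _ _))).
  by rewrite subv_add subvv andbT -memvE.
have [ts] := large_span n.+1.
have := dimvS (subvf (span (map f ts))); rewrite dimvf dim_matrix mul1r.
by move=> le_n gt_n; have := leq_trans gt_n le_n; rewrite ltnn.
Qed.
End FiniteSpan.

Local Open Scope classical_set_scope.

Lemma image_constant_on (T U : Type) (P : set T) (g : T -> U) (y : U) :
  P !=set0 -> (forall t, P t -> g t = y) -> g @` P = [set y].
Proof.
move=> [t0 Pt0] gP; apply/seteqP; split=> [_ [t Pt <-]|_ ->]; first exact: gP.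
by exists t0; rewrite ?gP.
Qed.

Lemma connected_subset_clopen (T : topologicalType) (V C : set T) :
  connected V -> clopen C -> V `&` C !=set0 -> V `<=` C.
Proof.
move=> conn_V [open_C closed_C] meet.
have VC : V `&` C = V by apply: conn_V => //; exists C.
by rewrite -VC => x [].
Qed.

Section Dual.
Variables (K : numFieldType) (X : topologicalLmodType K).

Lemma linear_lincomb (f : X -> K^o) m (c : nat -> K) (v : nat -> X) :
  linear f -> f (\sum_(i < m) c i *: v i) = \sum_(i < m) c i * f (v i).
Proof.
move=> lin_f.
pose F : {linear X -> K^o} := HB.pack f (GRing.isLinear.Build _ _ _ _ f lin_f).
change (F (\sum_(i < m) c i *: v i) = \sum_(i < m) c i * f (v i)).
by rewrite linear_sum; apply: eq_bigr => i _; rewrite linearZ.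
Qed.

Lemma dual0 : dual (fun _ : X => 0 : K^o).
Proof. by split=> [a u v|]; [rewrite scaler0 addr0 | exact: cst_continuous]. Qed.

Lemma dual_comb (a : K) (f g : X -> K^o) : dual f -> dual g ->
  dual (fun x => a * f x + g x).
Proof.
move=> [lin_f cont_f] [lin_g cont_g]; split=> [b u v|x].
  by rewrite lin_f lin_g /GRing.scale /=; ring.
apply: (@continuousD K K^o X (fun x => a * f x) g x); last exact: cont_g.
exact: continuousZl_tmp (cont_f x).
Qed.

Lemma dual_lincomb m (c : nat -> K) (t : nat -> X -> K^o) :
  (forall i, dual (t i)) -> dual (fun x => \sum_(i < m) c i * t i x).
Proof.
move=> dual_t; elim: m => [|m IHm].
  by under eq_fun do rewrite big_ord0; exact: dual0.
under eq_fun do rewrite big_ord_recr /= addrC.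
exact: dual_comb.
Qed.

Lemma dual_finitely_generated (s : seq X) :
  (forall sigma, dual sigma -> (forall a, a \in s -> sigma a = 0) ->
     forall x, sigma x = 0) ->
  exists m (t : nat -> X -> K^o), (forall i, dual (t i)) /\
    forall sigma, dual sigma ->
      exists c : nat -> K, forall x, sigma x = \sum_(i < m) c i * t i x.
Proof.
move=> annihilator_trivial.
pose T := {sigma : X -> K^o | dual sigma}.
pose restrict (sigma : T) : 'rV[K]_(size s) := \row_j sval sigma s`_j.
have [ts spanned] := finite_spanning_subfamily restrict.
pose d : T := exist _ _ dual0.
pose t i := sval (nth d ts i).
exists (size ts), t; split=> [i|sigma dual_sigma]; first exact: svalP.
have [c restrict_sigma] := mem_span_lincomb (spanned (exist _ sigma dual_sigma)).
rewrite size_map in restrict_sigma; exists c => x.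
pose tau x := -1 * \sum_(i < size ts) c i * t i x + sigma x.
suff /eqP: tau x = 0 by rewrite /tau mulN1r addrC subr_eq0 => /eqP.
apply: annihilator_trivial => [|a a_s].
  by apply: dual_comb => //; apply: dual_lincomb => i; apply: svalP.
have lt_a : (index a s < size s)%N by rewrite index_mem.
have := congr1 (fun M : 'rV[K]_(size s) => M 0 (Ordinal lt_a)) restrict_sigma.
rewrite !mxE summxE /= (nth_index 0 a_s) /tau => ->.
rewrite mulN1r addrC; apply/eqP; rewrite subr_eq0; apply/eqP.
by apply: eq_bigr => i _; rewrite mxE (nth_map d) // mxE /= (nth_index 0 a_s).
Qed.

Lemma finite_dimensional_of_dual_finitely_generated m (t : nat -> X -> K^o) :
  dual_separates X -> (forall i, dual (t i)) ->
  (forall sigma, dual sigma ->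
     exists c : nat -> K, forall x, sigma x = \sum_(i < m) c i * t i x) ->
  exists xs : seq X, forall x, exists c : nat -> K,
    x = \sum_(i < size xs) c i *: xs`_i.
Proof.
move=> separates dual_t generated.
pose coords x : 'rV[K]_m := \row_i t i x.
have [xs spanned] := finite_spanning_subfamily coords.
exists xs => x; have [c coords_x] := mem_span_lincomb (spanned x).
rewrite size_map in coords_x; exists c.
apply: contrapT => /separates[sigma dual_sigma]; apply.
have [c' sigma_eq] := generated sigma dual_sigma.
rewrite !sigma_eq; apply: eq_bigr => i _; congr (_ * _).
rewrite linear_lincomb; last exact: (dual_t i).1.
have := congr1 (fun M : 'rV[K]_m => M 0 i) coords_x.
rewrite mxE summxE => ->; apply: eq_bigr => j _.
by rewrite mxE (nth_map 0) // mxE.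
Qed.

Lemma nontrivial_annihilator (s : seq X) :
  infinite_dimensional X -> dual_separates X ->
  exists sigma, [/\ dual sigma, forall a, a \in s -> sigma a = 0 &
                    exists B, sigma B != 0].
Proof.
move=> inf_dim separates; apply: contrapT => no_sigma.
have annihilator_trivial sigma : dual sigma ->
    (forall a, a \in s -> sigma a = 0) -> forall x, sigma x = 0.
  move=> dual_sigma vanish x; apply: contrapT => /eqP sigma_x.
  by apply: no_sigma; exists sigma; split=> //; exists x.
have [m [t [dual_t generated]]] := dual_finitely_generated annihilator_trivial.
have [xs spanned] :=
  finite_dimensional_of_dual_finitely_generated separates dual_t generated.
have [x x_out] := inf_dim xs; have [c x_eq] := spanned x.
exact: x_out (fun i => c i) x_eq.
Qed.

Definition annihilator (S : set X) : set {ptws X -> K^o} :=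
  [set f | dual f /\ forall a, S a -> f a = 0].

Lemma closed_vanishing_at (x : X) : closed [set f : {ptws X -> K^o} | f x = 0].
Proof.
apply: (@closed_comp _ _ _ [set 0 : K^o]) => [f _|]; first exact: proj_continuous.
exact/accessible_closed_set1/hausdorff_accessible/norm_hausdorff.
Qed.

Lemma hyperset_annihilator (S : set X) : hyperset (annihilator S).
Proof.
split; first by exists (fun=> 0 : K^o); split=> //; exact: dual0.
split=> [f []//|f [cl_f dual_f]]; split=> // a Sa.
have sub : annihilator S `<=` [set g | g a = 0] by move=> g [_]; apply.
by have := closureS sub cl_f; rewrite -(closure_id _).1 //; exact: closed_vanishing_at.
Qed.

End Dual.

Section Hyperspace.
Variables (R : realType) (K : numFieldType) (nrm : K -> R).
Hypothesis nrm0 : nrm 0 = 0.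
Hypothesis nrmN : forall x, nrm (- x) = nrm x.
Hypothesis nrmD : forall x y, nrm (x + y) <= nrm x + nrm y.
Hypothesis nrm_unbounded : forall M : R, exists n : nat, M < nrm n%:R.
Variable X : topologicalLmodType K.
Local Notation H := (hyperspace nrm X).

Definition hannihilator (S : set X) : H := exist _ _ (hyperset_annihilator S).

Lemma dHC (A : X) (F G : set {ptws X -> K^o}) : dH nrm A F G = dH nrm A G F.
Proof.
have nrmC (u v : K) : nrm (u - v) = nrm (v - u) by rewrite -opprB nrmN.
rewrite /dH maxC; congr maxe; congr ereal_sup; apply: eq_imagel => s _;
  by congr ereal_inf; apply: eq_imagel => t _; rewrite nrmC.
Qed.

Lemma dH_lt_near (A : X) (F G : set {ptws X -> K^o}) (e : R) s :
  (dH nrm A F G < e%:E)%E -> F s -> exists2 t, G t & nrm (s A - t A) < e.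
Proof.
rewrite /dH gt_max => /andP[lt_e _] Fs.
have : (ereal_inf [set (nrm (s A - t A))%:E | t in G] < e%:E)%E.
  by apply: le_lt_trans lt_e; apply: ereal_sup_ubound; exists s.
by move=> /ereal_inf_lt[_ [t Gt <-]]; rewrite lte_fin; exists t.
Qed.

Lemma dH_vanishing (A : X) (F P Q : set {ptws X -> K^o}) :
  P !=set0 -> Q !=set0 ->
  (forall t, P t -> t A = 0) -> (forall t, Q t -> t A = 0) ->
  dH nrm A F P = dH nrm A F Q.
Proof.
move=> P0 Q0 vanish_P vanish_Q.
have eval_const (Y : set {ptws X -> K^o}) (g : K -> \bar R) :
    Y !=set0 -> (forall t, Y t -> t A = 0) -> [set g (t A) | t in Y] = [set g 0].
  by move=> ? vanish; apply: image_constant_on => // t /vanish ->.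
rewrite /dH; congr maxe; congr ereal_sup.
  apply: eq_imagel => s _; pose g k := (nrm (s A - k))%:E.
  by rewrite (eval_const _ g) // (eval_const _ g).
pose g k := ereal_inf [set (nrm (s A - k))%:E | s in F].
by rewrite (eval_const _ g) // (eval_const _ g).
Qed.

Lemma hball_center (A : X) (F : H) (e : R) : 0 < e -> hball nrm A F e F.
Proof.
move=> e_gt0; have sup_le0 (g : {ptws X -> K^o} -> {ptws X -> K^o} -> K) :
    (forall u, g u u = 0) ->
    (ereal_sup [set ereal_inf [set (nrm (g u v))%:E | v in sval F]
                | u in sval F] <= 0)%E.
  move=> g_diag; apply/ereal_supP => _ [u Fu <-].
  apply: le_trans (ereal_inf_lbound _) _; first by exists u.
  by rewrite g_diag nrm0.
rewrite /hball /dH /=; apply: (@le_lt_trans _ _ 0%E); last by rewrite lte_fin.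
by rewrite ge_max; apply/andP; split; apply: sup_le0 => u; rewrite subrr.
Qed.

Lemma open_hball (A : X) (F : H) (e : R) :
  0 < e -> open (hball nrm A F e : set H).
Proof.
move=> e_gt0; exists [set hball nrm A F e]; last by rewrite bigcup_set1.
by move=> _ ->; apply: finI_from1; exists A, F, e.
Qed.

Lemma hball_nbhs (A : X) (F : H) (e : R) : 0 < e -> nbhs F (hball nrm A F e).
Proof.
by move=> e_gt0; apply: open_nbhs_nbhs; split; [exact: open_hball | exact: hball_center].
Qed.

Lemma open_finitely_determined (V : set H) (F : H) : open V -> V F ->
  exists s : seq X, forall G : H,
    (forall A P, A \in s -> dH nrm A P (sval F) = dH nrm A P (sval G)) -> V G.
Proof.
move=> open_V VF; have [D [D_sub DF DV]] : exists D : {fset set H},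
    [/\ {subset D <= @hsubbase R K nrm X}, (\bigcap_(b in [set` D]) b) F
      & \bigcap_(b in [set` D]) b `<=` V].
  move: open_V VF => [Bs Bs_sub <-] [B Bs_B BF].
  have [D D_sub def_B] := Bs_sub B Bs_B; exists D; split=> //.
    by rewrite -def_B in BF.
  by move=> G DG; exists B => //; rewrite -def_B.
have /choice[center center_spec] : forall b : set H, exists A : X,
    b \in D -> exists P e, 0 < e /\ b = hball nrm A P e.
  move=> b; case: (boolP (b \in D)) => [b_D|_]; last by exists 0.
  have /set_mem[A [P [e [e_gt0 ->]]]] := D_sub b b_D.
  by exists A => _; exists P, e.
exists [seq center b | b <- D] => G same_dH; apply: DV => b b_D.
have [P [e [_ def_b]]] := center_spec b b_D.
have := DF b b_D; rewrite def_b /hball /= same_dH //.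
exact: map_f.
Qed.

Definition bounded_at (B : X) : set H :=
  [set G | exists M, forall t, sval G t -> nrm (t B) <= M].

Lemma bounded_at_near (B : X) (F G : H) :
  bounded_at B F -> (dH nrm B (sval G) (sval F) < 1%:E)%E -> bounded_at B G.
Proof.
move=> [M F_le_M] near_F; exists (M + 1) => t Gt.
have [s Fs lt1] := dH_lt_near near_F Gt.
rewrite -(subrK (s B) (t B)) addrC; apply: le_trans (nrmD _ _) _.
by apply: lerD; [exact: F_le_M | exact: ltW].
Qed.

Lemma clopen_bounded_at (B : X) : clopen (bounded_at B).
Proof.
split.
  rewrite openE => F bounded_F; apply: filterS (hball_nbhs B F ltr01) => G.
  by rewrite /hball /= dHC; apply: bounded_at_near.
rewrite -[bounded_at B]setCK closedC openE => F unbounded_F.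
apply: filterS (hball_nbhs B F ltr01) => G near_F bounded_G.
exact: unbounded_F (bounded_at_near bounded_G near_F).
Qed.

Lemma annihilator_unbounded_at (S : set X) (B : X) (sigma : X -> K^o) :
  dual sigma -> (forall a, S a -> sigma a = 0) -> sigma B != 0 ->
  ~ bounded_at B (hannihilator S).
Proof.
move=> dual_sigma vanish sigma_B [M le_M]; have [n lt_n] := nrm_unbounded M.
suff : nrm n%:R <= M by rewrite leNgt lt_n.
have := le_M (fun x => n%:R / sigma B * sigma x); rewrite /= divfK //; apply.
rewrite /annihilator; split=> [|a Sa]; first last.
  by rewrite (vanish a Sa) mulr0.
have := dual_comb (n%:R / sigma B) dual_sigma (dual0 X).
by under eq_fun do rewrite addr0.
Qed.

Theorem hyperspace_not_locally_connected :
  infinite_dimensional X -> dual_separates X -> ~ locally_connected H.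
Proof.
move=> inf_dim separates loc_conn.
pose Z := hannihilator setT.
have [V [open_V VZ conn_V _]] := loc_conn Z setT filterT.
have [s determined] := open_finitely_determined open_V VZ.
have [sigma [dual_sigma vanish [B sigma_B]]] :=
  nontrivial_annihilator s inf_dim separates.
pose G := hannihilator [set` s].
have VG : V G.
  apply: determined => A P A_s.
  by apply: dH_vanishing;
    [exact: (svalP Z).1 | exact: (svalP G).1 | move=> t [_]; apply ..].
have Z_bounded : bounded_at B Z by exists 0 => t [_ ->] //; rewrite nrm0.
have V_bounded : V `<=` bounded_at B.
  by apply: connected_subset_clopen conn_V (clopen_bounded_at B) _; exists Z.
exact: annihilator_unbounded_at dual_sigma vanish sigma_B (V_bounded G VG).
Qed.
End Hyperspace.

Theorem corollary3p5 :
  (forall (R : realType) (X : topologicalLmodType R),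
      hausdorff_space X -> infinite_dimensional X -> dual_separates X ->
      ~ locally_connected (hyperspace (@Num.norm R R) X)) /\
  (forall (R : realType) (X : topologicalLmodType R[i]),
      hausdorff_space X -> infinite_dimensional X -> dual_separates X ->
      ~ locally_connected (hyperspace (@ComplexField.Normc.normc R) X)).
Proof.
split=> R X _.
- apply: hyperspace_not_locally_connected.
  + exact: normr0.
  + exact: normrN.
  + exact: ler_normD.
  + move=> M; exists (Num.Def.archi_bound `|M|).
    by rewrite normr_nat (le_lt_trans (ler_norm M)) ?archi_boundP.
- apply: hyperspace_not_locally_connected.
  + exact: ComplexField.Normc.normc0.
  + exact: normcN.
  + exact: le_normcD.
  + move=> M; exists (Num.Def.archi_bound `|M|).
    by rewrite normcMn ComplexField.Normc.normc1 (le_lt_trans (ler_norm M)) ?archi_boundP.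
Qed.
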